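(* Let $k\ge0$ and let $n$ be a positive integer of length $l$ with $k(n)\le k$. Then $$\sum_{\substack{m:\ \mathrm{ld}_l(m)=n\\ k(m)=k}}\frac1m=\sum_{m=0}^{\infty}(-1)^m\frac{u_{k-k(n);m}}{n^{m+1}}.$$
   Context: Fix $b\ge2$ and $d\in\{0,\dots,b-1\}$. For an integer $n\ge0$, its length $l(n)$ is the smallest $l\ge0$ with $n<b^l$, and $k(n)$ is the number of occurrences of $d$ in its base-$b$ representation without leading zeros. For $m>0$ of length $q\ge l$, $\mathrm{ld}_l(m)=\lfloor m/b^{q-l}\rfloor$ (the sum on the left runs over positive integers $m$ of length $\ge l$). A string is a finite sequence $X=(d_l,\dots,d_1)$ of digits in $\{0,\dots,b-1\}$ (leading zeros allowed), of length $|X|=l\ge0$; its value is $n(X)=\sum_{i=1}^{l}d_ib^{i-1}$ ($0$ for the empty string). For $k\ge0$, $\mu_k=\sum_{X}b^{-|X|}\delta_{n(X)/b^{|X|}}$, the sum over all strings $X$ containing $d$ exactly $k$ times; it is a finite measure on $[0,1)$ of total mass $b$. The moments are $u_{k;m}=\int_{[0,1)}x^m\,d\mu_k(x)$ (with $0^0=1$). *)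

From HB Require Import structures.
From mathcomp Require Import all_boot all_order all_algebra.
From mathcomp Require Import all_classical all_reals all_analysis.
Set Implicit Arguments. Unset Strict Implicit. Unset Printing Implicit Defensive.
Import Order.TTheory GRing.Theory Num.Theory.

(* length l(n): the smallest l >= 0 with n < b^l (for b >= 2 it is < n+1). *)
Definition blen (b n : nat) : nat := find (fun l => n < b ^ l) (iota 0 n.+1).

Definition bdigit (b n i : nat) : nat := (n %/ b ^ i) %% b.

(* k(n): number of occurrences of the digit d in the base-b representation
   of n without leading zeros, i.e. among the digits 0 .. l(n)-1. *)
Definition kcount (b d n : nat) : nat :=
  count (fun i => bdigit b n i == d) (iota 0 (blen b n)).

(* ld_l(m) = floor(m / b^(q-l)), q = l(m) (used for l(m) >= l). *)
Definition ld (b l m : nat) : nat := m %/ b ^ (blen b m - l).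

(* Strings: finite sequences of digits in {0,..,b-1}, written
   X = (d_l, ..., d_1) with the head of the list the most significant digit.
   Value n(X) = sum_{i=1}^{l} d_i b^(i-1). *)
Definition strval (b : nat) (X : seq 'I_b) : nat :=
  foldl (fun acc (x : 'I_b) => acc * b + val x) 0 X.

Definition strcount (b d : nat) (X : seq 'I_b) : nat :=
  count (fun x : 'I_b => val x == d) X.

Local Open Scope ring_scope.

(* u_{k;m} = int x^m d mu_k(x), where
   mu_k = sum_{X : count_d X = k} b^{-|X|} delta_{n(X)/b^|X|};
   integrating against this countable sum of weighted Dirac masses is the
   (nonnegative, unordered) sum below.  It is finite (total mass b). *)
Definition u (R : realType) (b d k m : nat) : R :=
  fine (\esum_(X in [set X : seq 'I_b | strcount d X = k])
          ((b%:R ^- size X) * ((strval X)%:R / b%:R ^+ size X) ^+ m)%:E)%E.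

From HB Require Import structures.
From mathcomp Require Import all_boot all_order all_algebra.
From mathcomp Require Import all_classical all_reals all_analysis.
From mathcomp Require Import ring lra.
Import Order.TTheory GRing.Theory Num.Theory.
Import numFieldNormedType.Exports.

(* Appending a digit string X to n, X |-> n b^|X| + n(X), is a bijection from the
   strings with k - k(n) occurrences of d onto the m of the left-hand sum, and
   1/m = b^-|X| / (n + x) with x = n(X)/b^|X| in [0,1).  So the sum is the
   Stieltjes transform of mu = mu_(k-k(n)) at n.  Expanding 1/(n + x) as a
   geometric series in -x/n leaves after N terms the error
   (-1)^N x^N / (n^N (n + x)), whose mu-integral tends to 0 by dominated
   convergence, since mu is finite: grouping strings by length j, the number
   N_j(c) of strings of length j with c occurrences of d satisfies
   N_(j+1)(c) = (b-1) N_j(c) + N_j(c-1), whence sum_j N_j(c)/b^j <= b. *)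

Section Digits.
Variable b : nat.
Hypothesis b_ge2 : (2 <= b)%N.

Let b_gt0 : (0 < b)%N. Proof. exact: leq_trans b_ge2. Qed.
Let expb_gt0 j : (0 < b ^ j)%N. Proof. by rewrite expn_gt0 b_gt0. Qed.

Lemma blen_spec m :
  (m < b ^ blen b m)%N /\ (forall i, (i < blen b m)%N -> (b ^ i <= m)%N).
Proof.
have has_len : has (fun l => m < b ^ l)%N (iota 0 m.+1).
  by apply/hasP; exists m; [rewrite mem_iota ltnSn | exact: ltn_expl].
have := has_len; rewrite has_find size_iota => find_lt.
split; first by have := nth_find 0 has_len; rewrite /blen nth_iota.
move=> i lti; have := before_find 0 lti.
by rewrite nth_iota ?(ltn_trans lti) // => /negbT; rewrite -leqNgt.
Qed.

Lemma blen_unique m q : (m < b ^ q)%N ->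
  (forall i, (i < q)%N -> (b ^ i <= m)%N) -> blen b m = q.
Proof.
move=> ltmq minq; have [ltm minm] := blen_spec m.
case: (ltngtP (blen b m) q) => // lt_lq.
  by have := minq _ lt_lq; rewrite leqNgt ltm.
by have := minm _ lt_lq; rewrite leqNgt ltmq.
Qed.

Lemma blen_append n j s : (0 < n)%N -> (s < b ^ j)%N ->
  blen b (n * b ^ j + s) = (blen b n + j)%N.
Proof.
move=> n_gt0 ltsj; have [ltn minn] := blen_spec n.
apply: blen_unique.
  rewrite expnD; apply: (@leq_trans (n.+1 * b ^ j)).
    by rewrite mulSn addnC ltn_add2r.
  by rewrite leq_mul2r ltn orbT.
move=> i lti; apply: leq_trans (leq_addr _ _).
case: (ltnP i j) => [ltij | leji].
  by rewrite (leq_trans (leq_pexp2l b_gt0 (ltnW ltij))) // leq_pmull.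
rewrite -(subnK leji) expnD leq_mul2r minn ?orbT //.
by rewrite ltn_subLR // addnC.
Qed.

Lemma bdigit_append a j s i : (s < b ^ j)%N ->
  bdigit b (a * b ^ j + s) i =
  if (i < j)%N then bdigit b s i else bdigit b a (i - j).
Proof.
move=> ltsj; rewrite /bdigit; case: ltnP => [ltij | leji].
  have lt0ji : (0 < j - i)%N by rewrite subn_gt0.
  rewrite -[j](subnK (ltnW ltij)) -(prednK lt0ji) expnD expnSr !mulnA.
  by rewrite divnMDl // modnMDl.
by rewrite -(subnKC leji) addKn expnD divnMA divnMDl // (divn_small ltsj) addn0.
Qed.

Lemma ld_append n j s : (0 < n)%N -> (s < b ^ j)%N ->
  ld b (blen b n) (n * b ^ j + s) = n.
Proof.
move=> n_gt0 ltsj; rewrite /ld blen_append // addKn divnMDl //.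
by rewrite (divn_small ltsj) addn0.
Qed.

Lemma strval_rcons (X : seq 'I_b) x : strval (rcons X x) = (strval X * b + x)%N.
Proof. by rewrite /strval -cats1 foldl_cat. Qed.

Lemma strval_ltn (X : seq 'I_b) : (strval X < b ^ size X)%N.
Proof.
elim/last_ind: X => [|X x IH]; first by [].
rewrite strval_rcons size_rcons expnSr; apply: (@leq_trans ((strval X).+1 * b)%N).
  by rewrite mulSn addnC ltn_add2r.
by rewrite leq_mul2r IH orbT.
Qed.

Lemma strval_inj (X Y : seq 'I_b) :
  size X = size Y -> strval X = strval Y -> X = Y.
Proof.
elim/last_ind: X Y => [|X x IH] Y; first by case: Y.
case/lastP: Y => [|Y y]; first by rewrite size_rcons.
rewrite !size_rcons !strval_rcons => -[eq_size] eq_val.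
have eq_x : val x = val y.
  by have := congr1 (modn^~ b) eq_val; rewrite !modnMDl !modn_small.
have eq_X : strval X = strval Y.
  have := congr1 (divn^~ b) eq_val.
  by rewrite !divnMDl // !divn_small // !addn0.
by rewrite (IH Y eq_size eq_X) (val_inj eq_x).
Qed.

Lemma strval_onto j s : (s < b ^ j)%N ->
  exists2 X : seq 'I_b, size X = j & strval X = s.
Proof.
elim: j s => [|j IH] s ltsj.
  by exists [::] => //; move: ltsj; rewrite expn0 ltnS leqn0 => /eqP ->.
have [|X sizeX valX] := IH (s %/ b); first by rewrite ltn_divLR // -expnSr.
exists (rcons X (Ordinal (ltn_pmod s b_gt0))); first by rewrite size_rcons sizeX.
by rewrite strval_rcons valX /= -divn_eq.
Qed.

Lemma count_bdigit_strval d (X : seq 'I_b) :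
  count (fun i => bdigit b (strval X) i == d) (iota 0 (size X)) = strcount d X.
Proof.
elim/last_ind: X => [|X x IH] //.
have digit_rcons i : bdigit b (strval X * b + x) i =
    if i is i'.+1 then bdigit b (strval X) i' else x.
  have := @bdigit_append (strval X) 1 x i; rewrite expn1 => -> //.
  by case: i => [|i] /=; [rewrite /bdigit expn0 divn1 modn_small | rewrite subn1].
rewrite strval_rcons size_rcons -add1n iotaD count_cat /= digit_rcons.
rewrite /strcount -cats1 count_cat /= addn0 addnC -/(strcount d X) -IH.
congr (_ + _)%N; rewrite (iotaDl 1 0) count_map.
by apply: eq_count => i /=; rewrite digit_rcons.
Qed.

Lemma kcount_append d n (X : seq 'I_b) : (0 < n)%N ->
  kcount b d (n * b ^ size X + strval X) = (kcount b d n + strcount d X)%N.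
Proof.
move=> n_gt0; have ltX := strval_ltn X.
rewrite /kcount blen_append // [(blen b n + _)%N]addnC iotaD count_cat.
rewrite [RHS]addnC -count_bdigit_strval; congr (_ + _)%N.
  apply: eq_in_count => i; rewrite mem_iota add0n => /andP[_ ltiX] /=.
  by rewrite bdigit_append // ltiX.
rewrite add0n -[in iota (size X)](addn0 (size X)) iotaDl count_map.
apply: eq_count => i /=.
by rewrite bdigit_append // ltnNge leq_addr /= addKn.
Qed.

Lemma append_string_bij d k n : (0 < n)%N -> (kcount b d n <= k)%N ->
  set_bij [set X : seq 'I_b | strcount d X = (k - kcount b d n)%N]
    [set m : nat | [/\ (0 < m)%N, (blen b n <= blen b m)%N,
                    ld b (blen b n) m = n & kcount b d m = k]]
    (fun X => n * b ^ size X + strval X)%N.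
Proof.
move=> n_gt0 le_nk; split.
- move=> X /= cntX; split.
  + by rewrite addn_gt0 muln_gt0 n_gt0 expb_gt0.
  + by rewrite blen_append ?strval_ltn ?leq_addr.
  + by rewrite ld_append ?strval_ltn.
  + by rewrite kcount_append // cntX subnKC.
- move=> X Y _ _ /= eqXY.
  have eq_size : size X = size Y.
    by move: (congr1 (blen b) eqXY); rewrite !blen_append ?strval_ltn // => /addnI.
  by move: eqXY; rewrite eq_size => /addnI; apply: strval_inj.
- move=> m [_ _ ld_m cnt_m].
  set j := (blen b m - blen b n)%N.
  have def_m : m = (n * b ^ j + m %% b ^ j)%N.
    by rewrite {1}(divn_eq m (b ^ j)) -ld_m mulnC.
  have [X sizeX valX] := @strval_onto j _ (ltn_pmod m (expb_gt0 j)).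
  exists X; last by rewrite /= sizeX valX -def_m.
  by move: cnt_m; rewrite /= def_m -valX -sizeX kcount_append // => <-; rewrite addKn.
Qed.

End Digits.

Section Strings.
Variable b : nat.

Fixpoint strs (j : nat) : seq (seq 'I_b) :=
  if j is j'.+1 then [seq rcons X x | X <- strs j', x <- enum 'I_b] else [:: [::]].

Lemma mem_strs j X : (X \in strs j) = (size X == j).
Proof.
elim: j X => [|j IH] X; first by case: X.
apply/allpairsP/idP => [[[Y y] [/= inY _ ->]] | ].
  by rewrite size_rcons eqSS -IH.
case/lastP: X => [|Y y] //; rewrite size_rcons eqSS => sizeY.
by exists (Y, y); rewrite /= IH mem_enum.
Qed.

Lemma uniq_strs j : uniq (strs j).
Proof.
elim: j => [|j IH] //=; apply: allpairs_uniq => //; first exact: enum_uniq.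
by move=> [X x] [Y y] _ _ /= /rcons_inj [-> ->].
Qed.

Lemma strcount_rcons d (X : seq 'I_b) x :
  strcount d (rcons X x) = (strcount d X + (val x == d))%N.
Proof. by rewrite /strcount -cats1 count_cat /= addn0. Qed.

End Strings.

Section StringCount.
Variables (b d : nat).
Hypotheses (b_ge2 : (2 <= b)%N) (d_lt_b : (d < b)%N).

Definition strs_count j c := [seq X <- strs b j | strcount d X == c].

Definition ncount j c : nat := \sum_(X <- strs b j) (strcount d X == c).

Lemma ncount0 c : ncount 0 c = (c == 0)%N.
Proof. by rewrite /ncount big_seq1 eq_sym. Qed.

Lemma ncount_rec j c :
  ncount j.+1 c = (b.-1 * ncount j c + if c is c'.+1 then ncount j c' else 0)%N.
Proof.
have sum_last (X : seq 'I_b) : \sum_(x <- enum 'I_b) (strcount d (rcons X x) == c) =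
    (b.-1 * (strcount d X == c) + ((strcount d X).+1 == c))%N.
  rewrite big_enum (bigD1 (Ordinal d_lt_b)) //= strcount_rcons eqxx addn1 addnC.
  have card_ne : #|predC1 (Ordinal d_lt_b)| = b.-1 by rewrite cardC1 card_ord.
  congr (_ + _)%N; rewrite -card_ne -sum_nat_const.
  apply: eq_big => [x | x ne_xd]; first by rewrite !inE.
  rewrite strcount_rcons; suff /negPf -> : val x != d by rewrite addn0.
  by apply: contra ne_xd => /eqP eq_xd; apply/eqP/val_inj.
rewrite /ncount /= big_allpairs_dep /=; under eq_bigr do rewrite sum_last.
rewrite big_split /= -big_distrr /=; congr (_ + _)%N; clear sum_last.
by case: c => [|c]; [rewrite big1 | apply: eq_bigr => X _; rewrite eqSS].
Qed.

Variable R : realType.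
Local Open Scope ring_scope.

Lemma ncount_series_le J c : \sum_(0 <= j < J) (ncount j c)%:R / b%:R ^+ j <= b%:R :> R.
Proof.
have b_gt0 : (0 : R) < b%:R by rewrite ltr0n (leq_trans _ b_ge2).
have predb : b.-1%:R = b%:R - 1 :> R.
  by rewrite -[in RHS](prednK (leq_trans _ b_ge2)) // -addn1 natrD addrK.
have nc_rec j c' : (ncount j.+1 c')%:R / b%:R ^+ j.+1 =
    (b%:R - 1) / b%:R * ((ncount j c')%:R / b%:R ^+ j) +
    (if c' is c''.+1 then (ncount j c'')%:R / b%:R ^+ j else 0) / b%:R :> R.
  have bj_neq0 : b%:R ^+ j != 0 :> R by rewrite expf_neq0 // gt_eqF.
  rewrite ncount_rec natrD natrM predb exprS.
  by case: c' => [|c''] /=; field; rewrite bj_neq0 gt_eqF.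
have scale_le (y : R) : y <= b%:R -> (b%:R - 1) / b%:R * y <= b%:R - 1.
  move=> le_yb; rewrite -[leRHS](divfK (lt0r_neq0 b_gt0)) ler_wpM2l //.
  by rewrite divr_ge0 ?(ltW b_gt0) // subr_ge0 ler1n (leq_trans _ b_ge2).
elim: J c => [|J IH] c; first by rewrite big_geq // ler0n.
rewrite big_nat_recl // ncount0 expr0 divr1.
under eq_bigr do rewrite nc_rec.
rewrite big_split /= -mulr_sumr -mulr_suml.
have := scale_le _ (IH c); case: c => [|c] /=.
  by rewrite big1_eq mul0r; lra.
have : (\sum_(0 <= j < J) (ncount j c)%:R / b%:R ^+ j) / b%:R <= 1 :> R.
  by rewrite ler_pdivrMr // mul1r.
lra.
Qed.

Lemma strs_count_mass_le J c :
  \sum_(0 <= j < J) \sum_(X <- strs_count j c) (b%:R ^+ size X)^-1 <= b%:R :> R.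
Proof.
rewrite (eq_bigr (fun j => (ncount j c)%:R / b%:R ^+ j)) ?ncount_series_le // => j _.
rewrite big_filter /ncount natr_sum mulr_suml big_mkcond.
apply: eq_big_seq => X; rewrite mem_strs => /eqP ->.
by case: (strcount d X == c); rewrite ?mul1r ?mul0r.
Qed.

End StringCount.

Local Open Scope classical_set_scope.
Local Open Scope ring_scope.

Section SeriesLimits.
Context {R : realType}.

Lemma cvg_sum_seq {T : Type} (r : seq T) (f : T -> nat -> R) (a : T -> R) :
  (forall t, f t N @[N --> \oo] --> a t) ->
  \sum_(t <- r) f t N @[N --> \oo] --> \sum_(t <- r) a t.
Proof. by move=> cvg_f; apply: cvg_big => //; exact: add_continuous. Qed.

Lemma lim_series_tail_le {f g : R ^nat} J :
  (forall j, 0 <= f j) -> (forall j, f j <= g j) -> cvgn (series g) ->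
  limn (series f) - series f J <= limn (series g) - series g J.
Proof.
move=> f_ge0 le_fg cvg_g.
have g_ge0 j : 0 <= g j := le_trans (f_ge0 j) (le_fg j).
have cvg_f : cvgn (series f) := series_le_cvg f_ge0 g_ge0 le_fg cvg_g.
have gap_nd : nondecreasing_seq (series g - series f).
  apply/nondecreasing_seqP => k; rewrite !fctE !seriesSr.
  by have := le_fg k; lra.
have := nondecreasing_cvgn_le gap_nd (is_cvgB cvg_g cvg_f) J.
by rewrite limB // !fctE => /(_ eventually_filter); lra.
Qed.

Lemma lim_series_dominated_cvg0 (f : nat -> R ^nat) (g : R ^nat) :
  (forall N j, 0 <= f N j) -> (forall N j, f N j <= g j) -> cvgn (series g) ->
  (forall j, f N j @[N --> \oo] --> 0) ->
  limn (series (f N)) @[N --> \oo] --> 0.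
Proof.
move=> f_ge0 le_fg cvg_g f_cvg0; apply/cvgr0Pnorm_le => e e_gt0.
have g_ge0 j : 0 <= g j := le_trans (f_ge0 0%N j) (le_fg 0%N j).
have e2_gt0 : 0 < e / 2 by rewrite divr_gt0.
have [J _ tailJ] := (cvgrPdist_le _ _).1 cvg_g _ e2_gt0.
have head_cvg0 : series (f N) J @[N --> \oo] --> 0.
  have := cvg_sum_seq (index_iota 0 J) (fun j N => f N j) (fun=> 0) f_cvg0.
  by rewrite big1.
near=> N.
have lim_ge0 : 0 <= limn (series (f N)).
  apply: limr_ge; first exact: series_le_cvg (f_ge0 N) g_ge0 (le_fg N) cvg_g.
  by apply: nearW => K; apply: sumr_ge0 => j _.
have tail_le : limn (series g) - series g J <= e / 2.
  exact: le_trans (ler_norm _) (tailJ J (leqnn J)).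
have head_le : series (f N) J <= e / 2.
  by apply: le_trans (ler_norm _) _; near: N; exact: cvgr0_norm_le.
have := lim_series_tail_le J (f_ge0 N) (le_fg N) cvg_g.
rewrite ger0_norm //; lra.
Unshelve. all: by end_near. Qed.

End SeriesLimits.

(* [L j] lists the atoms of length [j] of a discrete measure with weight [w i]
   at [x i]; a series over [j] integrates against that measure. *)
Section StieltjesExpansion.
Context {R : realType} {I : Type}.
Variables (L : nat -> seq I) (w x : I -> R) (n : R).
Hypotheses (n_ge1 : 1 <= n) (w_ge0 : forall i, 0 <= w i).
Hypotheses (x_ge0 : forall i, 0 <= x i) (x_lt1 : forall i, x i < 1).

Definition moment j m := \sum_(i <- L j) w i * x i ^+ m.

Definition stieltjes_rem N j := \sum_(i <- L j) w i * x i ^+ N / (n + x i).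

Hypothesis cvg_mass : cvgn (series (moment^~ 0%N)).

Let n_gt0 : 0 < n. Proof. exact: lt_le_trans n_ge1. Qed.
Let nx_gt0 i : 0 < n + x i. Proof. exact: ltr_wpDr. Qed.
Let xpow_le1 i N : x i ^+ N <= 1. Proof. by rewrite exprn_ile1 // ltW. Qed.

Lemma moment_ge0 j m : 0 <= moment j m.
Proof. by apply: sumr_ge0 => i _; rewrite mulr_ge0 ?exprn_ge0. Qed.

Lemma moment_le_mass j m : moment j m <= moment j 0.
Proof. by apply: ler_sum => i _; rewrite expr0 mulr1 ler_piMr. Qed.

Lemma stieltjes_rem_ge0 N j : 0 <= stieltjes_rem N j.
Proof. by apply: sumr_ge0 => i _; rewrite divr_ge0 ?mulr_ge0 ?exprn_ge0 // ltW. Qed.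

Lemma stieltjes_rem_le_mass N j : stieltjes_rem N j <= moment j 0.
Proof.
apply: ler_sum => i _; rewrite expr0 mulr1 ler_pdivrMr //.
rewrite -[leLHS]mulr1 ler_pM ?mulr_ge0 ?exprn_ge0 //; first by rewrite ler_piMr.
by rewrite (le_trans n_ge1) // lerDl.
Qed.

Lemma cvg_series_le_mass (f : R ^nat) :
  (forall j, 0 <= f j) -> (forall j, f j <= moment j 0) -> cvgn (series f).
Proof.
move=> f_ge0 f_le; apply: series_le_cvg f_ge0 _ f_le cvg_mass => j.
exact: moment_ge0.
Qed.

Lemma stieltjes_remS N j : stieltjes_rem N.+1 j = moment j N - n * stieltjes_rem N j.
Proof.
rewrite /stieltjes_rem /moment mulr_sumr -sumrB; apply: eq_bigr => i _.
by rewrite exprS; field; rewrite lt0r_neq0.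
Qed.

Lemma stieltjes_rem_expansion N j :
  stieltjes_rem 0 j - \sum_(0 <= m < N) (-1) ^+ m * moment j m / n ^+ m.+1 =
  (-1) ^+ N / n ^+ N * stieltjes_rem N j.
Proof.
elim: N => [|N IH]; first by rewrite big_geq // subr0 !expr0 divr1 mul1r.
rewrite big_nat_recr //= opprD addrA IH stieltjes_remS !exprS.
by field; rewrite expf_neq0 lt0r_neq0.
Qed.

Lemma lim_stieltjes_rem_expansion N :
  limn (series (stieltjes_rem 0)) -
    \sum_(0 <= m < N) (-1) ^+ m * limn (series (moment^~ m)) / n ^+ m.+1 =
  (-1) ^+ N / n ^+ N * limn (series (stieltjes_rem N)).
Proof.
have cvg_rem M : cvgn (series (stieltjes_rem M)).
  exact: cvg_series_le_mass (stieltjes_rem_ge0 M) (stieltjes_rem_le_mass M).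
have cvg_moment m : cvgn (series (moment^~ m)).
  exact: cvg_series_le_mass (moment_ge0^~ m) (moment_le_mass^~ m).
have partial_sums K : series (stieltjes_rem 0) K -
    \sum_(0 <= m < N) (-1) ^+ m * series (moment^~ m) K / n ^+ m.+1 =
    (-1) ^+ N / n ^+ N * series (stieltjes_rem N) K.
  under eq_bigr do rewrite /series /= mulr_sumr mulr_suml.
  rewrite exchange_big_nat /= -sumrB mulr_sumr.
  by apply: eq_bigr => j _; exact: stieltjes_rem_expansion.
have cvg_lhs : (-1) ^+ N / n ^+ N * series (stieltjes_rem N) K @[K --> \oo] -->
    limn (series (stieltjes_rem 0)) -
    \sum_(0 <= m < N) (-1) ^+ m * limn (series (moment^~ m)) / n ^+ m.+1.
  under eq_cvg do rewrite -partial_sums.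
  apply: cvgB; first exact: cvg_rem.
  apply: cvg_sum_seq => m; apply: cvgMr_tmp; apply: cvgMl_tmp; exact: cvg_moment.
by rewrite -(cvg_lim _ cvg_lhs) //; apply: cvg_lim => //; exact: cvgMl_tmp.
Qed.

Lemma lim_stieltjes_rem_cvg0 : limn (series (stieltjes_rem N)) @[N --> \oo] --> 0.
Proof.
apply: lim_series_dominated_cvg0 stieltjes_rem_ge0 stieltjes_rem_le_mass cvg_mass _ => j.
suff : stieltjes_rem N j @[N --> \oo] --> \sum_(i <- L j) (0 : R) by rewrite big1.
apply: cvg_sum_seq => i; rewrite -(mul0r (n + x i)^-1) -(mulr0 (w i)).
by apply: cvgMr_tmp; apply: cvgMl_tmp; apply: cvg_expr; rewrite ger0_norm.
Qed.

Theorem stieltjes_expansion :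
  [series (-1) ^+ m * limn (series (moment^~ m)) / n ^+ m.+1]_m @ \oo -->
  limn (series (stieltjes_rem 0)).
Proof.
apply/cvgrPdist_le => e e_gt0.
have /cvgr0Pnorm_le/(_ e e_gt0) := lim_stieltjes_rem_cvg0.
apply: filterS => N /= rem_le; rewrite lim_stieltjes_rem_expansion normrM.
apply: le_trans rem_le; apply: ler_piMl => //.
rewrite normrM normrX normrN normr1 expr1n mul1r normfV normrX ger0_norm ?(ltW n_gt0) //.
by rewrite invr_le1 ?exprn_ege1 ?unitfE ?expf_neq0 ?lt0r_neq0 ?exprn_gt0.
Qed.

End StieltjesExpansion.

Lemma esum_bigcup_seq {R : realType} {T : choiceType} (L : nat -> seq T) (f : T -> R) :
  (forall j, uniq (L j)) -> trivIset setT (fun j => [set` L j]) ->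
  (forall t, 0 <= f t) -> cvgn (series (fun j => \sum_(t <- L j) f t)) ->
  (\esum_(t in \bigcup_j [set` L j]) (f t)%:E =
    (limn (series (fun j => \sum_(t <- L j) f t)))%:E)%E.
Proof.
move=> uniqL disjL f_ge0 cvg_f.
rewrite nneseries_sum_bigcup //.
rewrite -EFin_lim //; congr (limn _); apply/funext => N /=.
rewrite -sumEFin; apply: eq_bigr => j _.
rewrite esum_fset ?finite_seq // => [|t _]; last by rewrite lee_fin.
by rewrite -fsbig_seq // sumEFin.
Qed.

Section StringMeasure.
Variables (R : realType) (b d c : nat).
Hypotheses (b_ge2 : (2 <= b)%N) (d_lt_b : (d < b)%N).

Local Notation L := (strs_count b d ^~ c).

(* mu_c is the sum of the Dirac masses [strweight X] at [stratom X] over the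
   strings X with c occurrences of d, listed by length in [L]. *)
Definition strweight (X : seq 'I_b) : R := (b%:R ^+ size X)^-1.

Definition stratom (X : seq 'I_b) : R := (strval X)%:R / b%:R ^+ size X.

Let b_gt0 : 0 < b%:R :> R. Proof. by rewrite ltr0n (leq_trans _ b_ge2). Qed.

Lemma strweight_ge0 X : 0 <= strweight X.
Proof. by rewrite invr_ge0 exprn_ge0 // ltW. Qed.

Lemma stratom_ge0 X : 0 <= stratom X.
Proof. by rewrite divr_ge0 ?exprn_ge0 // ltW. Qed.

Lemma stratom_lt1 X : stratom X < 1.
Proof. by rewrite ltr_pdivrMr ?exprn_gt0 // mul1r -natrX ltr_nat strval_ltn. Qed.

Lemma cvg_strs_count_mass : cvgn (series (moment L strweight stratom ^~ 0%N)).
Proof.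
apply: nondecreasing_is_cvgn.
  by apply: nondecreasing_series => j _ _; exact: moment_ge0 strweight_ge0 stratom_ge0 _ _.
have mass_eq j : moment L strweight stratom j 0 = \sum_(X <- L j) strweight X.
  by apply: eq_bigr => X _; rewrite expr0 mulr1.
exists b%:R => _ [J _ <-]; rewrite /series /=; under eq_bigr do rewrite mass_eq.
exact: strs_count_mass_le.
Qed.

Lemma esum_strs_count (f : seq 'I_b -> R) :
  (forall X, 0 <= f X) ->
  (forall j, \sum_(X <- L j) f X <= moment L strweight stratom j 0) ->
  (\esum_(X in [set X | strcount d X = c]) (f X)%:E =
    (limn (series (fun j => \sum_(X <- L j) f X)))%:E)%E.
Proof.
move=> f_ge0 f_le.
have -> : [set X | strcount d X = c] = \bigcup_j [set` L j].
  apply/seteqP; split => X /=.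
    by move=> cntX; exists (size X) => //=; rewrite mem_filter cntX eqxx mem_strs /=.
  by case=> j _; rewrite /= mem_filter => /andP[/eqP].
apply: esum_bigcup_seq => // [j | i j _ _ [X] | ].
- by rewrite filter_uniq ?uniq_strs.
- by rewrite /= !mem_filter !mem_strs => -[/andP[_ /eqP <-] /andP[_ /eqP]].
- apply: cvg_series_le_mass strweight_ge0 stratom_ge0 cvg_strs_count_mass _ _ f_le.
  by move=> j; apply: sumr_ge0 => X _.
Qed.

Lemma u_moment m : u R b d c m = limn (series (moment L strweight stratom ^~ m)).
Proof.
rewrite /u esum_strs_count // => j.
exact: moment_le_mass strweight_ge0 stratom_ge0 stratom_lt1 j m.
Qed.

Lemma esum_inv_append n : (0 < n)%N ->
  (\esum_(X in [set X : seq 'I_b | strcount d X = c])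
      (((n * b ^ size X + strval X)%N)%:R^-1)%:E =
    (limn (series (stieltjes_rem L strweight stratom n%:R 0)))%:E :> \bar R)%E.
Proof.
move=> n_gt0; have n_ge1 : 1 <= n%:R :> R by rewrite ler1n.
rewrite -esum_strs_count; first last.
- exact: stieltjes_rem_le_mass n_ge1 strweight_ge0 stratom_ge0 stratom_lt1 0%N.
- move=> X; rewrite expr0 mulr1 divr_ge0 ?strweight_ge0 //.
  by rewrite addr_ge0 ?stratom_ge0.
apply: eq_esum => X _; congr (_%:E).
rewrite /strweight /stratom natrD natrM natrX expr0 mulr1.
have bX_neq0 : b%:R ^+ size X != 0 :> R by rewrite expf_neq0 ?lt0r_neq0.
have m_neq0 : n%:R * b%:R ^+ size X + (strval X)%:R != 0 :> R.
  by rewrite lt0r_neq0 // ltr_wpDr // mulr_gt0 ?ltr0n ?exprn_gt0.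
by field; rewrite bX_neq0 m_neq0.
Qed.

End StringMeasure.

Theorem mainTheorem6 (R : realType) (b d k n l : nat) :
  (2 <= b)%N -> (d < b)%N -> (0 < n)%N -> l = blen b n ->
  (kcount b d n <= k)%N ->
  exists S : R,
    (\esum_(m in [set m : nat | [/\ (0 < m)%N, (l <= blen b m)%N,
                                   ld b l m = n & kcount b d m = k]])
        (m%:R^-1 : R)%:E)%E = S%:E
    /\ [series (-1) ^+ j * u R b d (k - kcount b d n) j / n%:R ^+ j.+1]_j
         @ \oo --> S.
Proof.
move=> b_ge2 d_lt_b n_gt0 -> le_nk; set c := (k - kcount b d n)%N.
pose L := strs_count b d ^~ c.
exists (limn (series (stieltjes_rem L (strweight R b) (stratom R b) n%:R 0))); split.
  rewrite (reindex_esum _ _ _ _ (@append_string_bij b b_ge2 d k n n_gt0 le_nk)).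
  exact: esum_inv_append.
have -> : u R b d c =
    fun m => limn (series (moment L (strweight R b) (stratom R b) ^~ m)).
  by apply/funext => m; exact: u_moment.
apply: stieltjes_expansion; rewrite ?ler1n //.
- exact: strweight_ge0.
- exact: stratom_ge0.
- exact: stratom_lt1.
- exact: cvg_strs_count_mass.
Qed.
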